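(* Let $G$, $H$, the supervisors with $\Sigma_{o,i},\Sigma_{c,i},N_{o,i}$, a controllable event $\sigma\in\Sigma_c$, $N=\max\{N_{o,i}:i\in I^c(\sigma)\}$, and the verifiers $V^k_\sigma$ ($k=0,\dots,N$) with reachable state sets $X^k_\sigma$ be as in the context. Then $\mathcal{L}(H)$ is delay coobservable w.r.t. $N_{o,1},\dots,N_{o,n}$, $\sigma$, and $\mathcal{L}(G)$ if and only if for every $k\in\{0,1,\dots,N\}$ there is no state $(q,(q_i)_{i\in I^c(\sigma)},k)\in X^k_\sigma$ with $\sigma\in\Gamma(q)\setminus\Gamma_H(q)$ and $\sigma\in\Gamma^{aug}_{H,N_{o,i}}(q_i)$ for all $i\in I^c(\sigma)$.
   Context: $G=(Q,\Sigma,\delta,\Gamma,q_0,Q_m)$ is a deterministic finite automaton (transition function extended to strings; $\Gamma(q)$ = set of events defined at $q$; $\mathcal{L}(G)$ its generated language). $H=(Q_H,\Sigma,\delta_H,\Gamma_H,q_0,Q_{m,H})$ is a sub-automaton of $G$. For a string $s$, $|s|$ is its length, $s_{-m}$ its prefix of length $\max\{0,|s|-m\}$, $\Sigma^{\le M}$ the strings of length at most $M$. Supervisors $I=\{1,\dots,n\}$: supervisor $i$ has observable events $\Sigma_{o,i}$, $\Sigma_{uo,i}=\Sigma\setminus\Sigma_{o,i}$, controllable events $\Sigma_{c,i}$, delay bound $N_{o,i}\in\mathbb{N}$; $\Sigma_c=\bigcup_i\Sigma_{c,i}$, $I^c(\sigma)=\{i:\sigma\in\Sigma_{c,i}\}$.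 $P_i$ is natural projection onto $\Sigma_{o,i}^*$; $\Theta_i^{N_{o,i}}(s)=\{P_i(s_{-m}):0\le m\le N_{o,i}\}$ for $s\in\mathcal{L}(G)$; $(\Theta_i^{N_{o,i}})^{-1}(t)=\{u\in\mathcal{L}(G):t\in\Theta_i^{N_{o,i}}(u)\}$, extended to sets elementwise. $\mathcal{L}(H)$ is delay coobservable w.r.t. $N_{o,1},\dots,N_{o,n}$, $\sigma$, and $\mathcal{L}(G)$ if for every $s\in\mathcal{L}(H)$ with $s\sigma\in\mathcal{L}(G)\setminus\mathcal{L}(H)$ there is $i\in I^c(\sigma)$ with $(\Theta_i^{N_{o,i}})^{-1}(\Theta_i^{N_{o,i}}(s))\sigma\cap\mathcal{L}(H)=\emptyset$. Augmented automaton $H^{aug}_N$: states $Q_H\cup\{q_{dis}\}$; for $q\in Q_H$, $e\in\Sigma$: $\delta^{aug}(q,e)=\delta_H(q,e)$ if $e\in\Gamma_H(q)$, $=q_{dis}$ if $e\notin\Gamma_H(q)$ and $e\in\Gamma_H(\delta_H(q,s'))$ for some $s'\in\Sigma^{\le N}$ with $\delta_H(q,s')$ defined, undefined otherwise; $\Gamma^{aug}_{H,N}(q)$ is the set of events defined at $q$ in $H^{aug}_N$. For $k\in\{0,\dots,N\}$ the verifier $V^k_\sigma$ has states $(q,(q_i)_{i\in I^c(\sigma)},d)$ with $q,q_i\in Q_H$, $d\in[0,k]$. Initial states: for $k<N$, the single state $(q_0,(q_0)_i,0)$; for $k=N$, all $(q,(q_i)_i,0)$ such that there exist $t\in\mathcal{L}(H)$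 with $q=\delta_H(q_0,t)$ and, for each $i\in I^c(\sigma)$, $s_i\in\mathcal{L}(H)$ with $q_i=\delta_H(q_0,s_i)$ and $P_i(s_i)=P_i(t)$. At a state $(q,(q_i)_i,d)$ and for $e\in\Sigma$, each $i\in I^c(\sigma)$ falls in one case: C1: $k-d>N_{o,i}$, $e\in\Sigma_{o,i}$; C2: $k-d>N_{o,i}$, $e\in\Sigma_{uo,i}$; C3: $k-d\le N_{o,i}$, $\sigma\notin\Gamma^{aug}_{H,N_{o,i}}(q_i)$, $e\in\Sigma_{o,i}$; C4: $k-d\le N_{o,i}$, $\sigma\notin\Gamma^{aug}_{H,N_{o,i}}(q_i)$, $e\in\Sigma_{uo,i}$; C5: $k-d\le N_{o,i}$, $\sigma\in\Gamma^{aug}_{H,N_{o,i}}(q_i)$. Type-1 transition: if $d+1\le k$, $\delta_H(q,e)$ is defined, and $\delta_H(q_i,e)$ is defined for every $i$ in C1 or C3, there is a transition to $(\delta_H(q,e),(q_i')_i,d+1)$ with $q_i'=\delta_H(q_i,e)$ for $i$ in C1 or C3 and $q_i'=q_i$ otherwise. Type-2 transition: for each $i$ in C2 or C4 with $\delta_H(q_i,e)$ defined, there is a transition to the state obtained by replacing $q_i$ by $\delta_H(q_i,e)$, all other components unchanged. $X^k_\sigma$ is the set of states of $V^k_\sigma$ reachable from its initial state(s). *)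

From mathcomp Require Import all_boot.
Set Implicit Arguments. Unset Strict Implicit. Unset Printing Implicit Defensive.

Section DelayCoobs.
Variables (Q Sigma : finType).

Definition ext (d : Q -> Sigma -> option Q) (q : Q) (s : seq Sigma) : option Q :=
  foldl (fun o e => if o is Some p then d p e else None) (Some q) s.

Definition lang (d : Q -> Sigma -> option Q) (q0 : Q) (s : seq Sigma) : Prop :=
  ext d q0 s <> None.

Definition proj (So : {set Sigma}) (s : seq Sigma) : seq Sigma :=
  [seq e <- s | e \in So].

Definition trunc (s : seq Sigma) (m : nat) : seq Sigma := take (size s - m) s.

Definition Theta (So : {set Sigma}) (No : nat) (s t : seq Sigma) : Prop :=
  exists m, m <= No /\ t = proj So (trunc s m).

Definition Theta_inv (delta : Q -> Sigma -> option Q) (q0 : Q)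
  (So : {set Sigma}) (No : nat) (T : seq Sigma -> Prop) (u : seq Sigma) : Prop :=
  lang delta q0 u /\ exists t, T t /\ Theta So No u t.

Definition delay_coobservable (delta deltaH : Q -> Sigma -> option Q) (q0 : Q)
  (n : nat) (So Sc : 'I_n -> {set Sigma}) (No : 'I_n -> nat) (sigma : Sigma) : Prop :=
  forall s, lang deltaH q0 s ->
    lang delta q0 (rcons s sigma) -> ~ lang deltaH q0 (rcons s sigma) ->
    exists i, sigma \in Sc i /\
      forall u, Theta_inv delta q0 (So i) (No i) (Theta (So i) (No i) s) u ->
        ~ lang deltaH q0 (rcons u sigma).

(* Augmented automaton H^aug_N: transitions from q \in Q_H, with target
   [Some q'] a state of Q_H or [None] standing for q_dis. *)
Definition aug_trans (QH : {set Q}) (deltaH : Q -> Sigma -> option Q) (N : nat)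
  (q : Q) (e : Sigma) (x : option Q) : Prop :=
  q \in QH /\
  ((exists q', deltaH q e = Some q' /\ x = Some q') \/
   (deltaH q e = None /\ x = None /\
     exists s' p, size s' <= N /\ ext deltaH q s' = Some p /\ deltaH p e <> None)).

Definition GammaAug (QH : {set Q}) (deltaH : Q -> Sigma -> option Q) (N : nat)
  (q : Q) (e : Sigma) : Prop :=
  exists x, aug_trans QH deltaH N q e x.

Section Verifier.
Variables (QH : {set Q}) (deltaH : Q -> Sigma -> option Q) (q0 : Q)
  (n : nat) (So Sc : 'I_n -> {set Sigma}) (No : 'I_n -> nat) (sigma : Sigma).

Definition Ic (i : 'I_n) : bool := sigma \in Sc i.

Definition Nmax : nat := \max_(i < n | Ic i) No i.

(* Verifier states (q, (q_i)_i, d); the components q_i for i \notin I^c(sigma)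
   are dummy (fixed to q0, never updated). *)
Definition vstate : Type := (Q * ('I_n -> Q) * nat)%type.

Definition C1 (k d : nat) (i : 'I_n) (qi : Q) (e : Sigma) : Prop :=
  No i < k - d /\ e \in So i.
Definition C2 (k d : nat) (i : 'I_n) (qi : Q) (e : Sigma) : Prop :=
  No i < k - d /\ e \notin So i.
Definition C3 (k d : nat) (i : 'I_n) (qi : Q) (e : Sigma) : Prop :=
  k - d <= No i /\ ~ GammaAug QH deltaH (No i) qi sigma /\ e \in So i.
Definition C4 (k d : nat) (i : 'I_n) (qi : Q) (e : Sigma) : Prop :=
  k - d <= No i /\ ~ GammaAug QH deltaH (No i) qi sigma /\ e \notin So i.
Definition C5 (k d : nat) (i : 'I_n) (qi : Q) (e : Sigma) : Prop :=
  k - d <= No i /\ GammaAug QH deltaH (No i) qi sigma.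

Definition v_init (k : nat) (x : vstate) : Prop :=
  let: (q, qs, d) := x in
  d = 0 /\
  if k < Nmax then q = q0 /\ (forall i, qs i = q0)
  else k = Nmax /\
    exists t, lang deltaH q0 t /\ ext deltaH q0 t = Some q /\
      forall i, (Ic i -> exists si, lang deltaH q0 si /\
                   ext deltaH q0 si = Some (qs i) /\ proj (So i) si = proj (So i) t)
             /\ (~~ Ic i -> qs i = q0).

Definition v_step1 (k : nat) (x y : vstate) : Prop :=
  let: (q, qs, d) := x in
  exists e q' qs',
    d.+1 <= k /\ deltaH q e = Some q' /\
    (forall i, Ic i -> (C1 k d i (qs i) e \/ C3 k d i (qs i) e) ->
        deltaH (qs i) e = Some (qs' i)) /\
    (forall i, ~ (Ic i /\ (C1 k d i (qs i) e \/ C3 k d i (qs i) e)) -> qs' i = qs i) /\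
    y = (q', qs', d.+1).

Definition v_step2 (k : nat) (x y : vstate) : Prop :=
  let: (q, qs, d) := x in
  exists e i qi',
    Ic i /\ (C2 k d i (qs i) e \/ C4 k d i (qs i) e) /\
    deltaH (qs i) e = Some qi' /\
    y = (q, (fun j => if j == i then qi' else qs j), d).

Inductive v_reach (k : nat) : vstate -> Prop :=
| VR_init x : v_init k x -> v_reach k x
| VR_step1 x y : v_reach k x -> v_step1 k x y -> v_reach k y
| VR_step2 x y : v_reach k x -> v_step2 k x y -> v_reach k y.

End Verifier.
End DelayCoobs.

(* A reachable verifier state (q, (q_i), d) is explained by a string t w of H
   reaching q with |w| = d and, for every i, a string u_i reaching q_i that
   supervisor i cannot tell from t w with at most its last d events removed.
   At a violating state of level k, extending u_i by the at most N_{o,i} events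
   that enable sigma from q_i gives a string of Theta_i^{-1}(Theta_i(t w)) that
   H continues by sigma, so delay coobservability fails.
   Conversely, take a counterexample s with such strings U_i for all i, let w be
   the last k = min(|s|, N) events of s and u_i the prefix of U_i whose
   observation is a delayed observation of s. Drive the verifier along w by
   type-1 transitions, component i following u_i and consuming the events it
   cannot observe by type-2 transitions; once u_i is exhausted, sigma is enabled
   within N_{o,i} steps and the component freezes (case C5). At level k every
   component is frozen: the state reached is violating. *)

From mathcomp Require Import all_boot zify.
From Stdlib Require Import Classical.
Set Implicit Arguments. Unset Strict Implicit. Unset Printing Implicit Defensive.

Section Languages.
Variables (Q Sigma : finType).
Implicit Types (delta deltaH : Q -> Sigma -> option Q) (A : {set Sigma}).
Implicit Types (s a b : seq Sigma).

Lemma ext_cat delta q a b :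
  ext delta q (a ++ b) = if ext delta q a is Some p then ext delta p b else None.
Proof. by rewrite /ext foldl_cat; case: (foldl _ _ a) => //; elim: b. Qed.

Lemma ext_rcons delta q s e :
  ext delta q (rcons s e) = if ext delta q s is Some p then delta p e else None.
Proof. by rewrite -cats1 ext_cat; case: (ext delta q s). Qed.

Lemma ext_prefix delta q a b :
  ext delta q (a ++ b) <> None -> exists p, ext delta q a = Some p.
Proof. by rewrite ext_cat; case: (ext delta q a) => [p|] // _; exists p. Qed.

Lemma proj_cat A a b : proj A (a ++ b) = proj A a ++ proj A b.
Proof. exact: filter_cat. Qed.

Lemma proj_rcons A s e :
  proj A (rcons s e) = if e \in A then rcons (proj A s) e else proj A s.
Proof. exact: filter_rcons. Qed.

Lemma proj_prefix A s a b :
  proj A s = a ++ b -> exists v r, s = v ++ r /\ proj A v = a.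
Proof.
elim: s a => [|e s IH] [|x a] //=; try by exists [::]; eexists.
rewrite /proj /=; case: ifP => eA.
  case=> <- /IH [v [r [-> hv]]].
  by exists (e :: v), r; rewrite /= eA -hv.
move=> /(IH (x :: a)) [v [r [-> hv]]].
by exists (e :: v), r; rewrite /= eA -hv.
Qed.

Lemma trunc_cat a b m : m <= size b \/ a = [::] -> trunc (a ++ b) m = a ++ trunc b m.
Proof.
rewrite /trunc size_cat => -[hm|->] //.
rewrite (_ : _ - m = size a + (size b - m)); last by lia.
by rewrite takeD take_size_cat // drop_size_cat.
Qed.

Lemma trunc_size_cat a b : trunc (a ++ b) (size b) = a.
Proof. by rewrite /trunc size_cat addnK take_size_cat. Qed.

Definition subautomaton (QH : {set Q}) delta deltaH :=
  forall q e q', q \in QH -> deltaH q e = Some q' -> q' \in QH /\ delta q e = Some q'.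

Lemma subautomaton_ext QH delta deltaH : subautomaton QH delta deltaH ->
  forall s q p, q \in QH -> ext deltaH q s = Some p -> p \in QH /\ ext delta q s = Some p.
Proof.
move=> hsub s q + qH; elim/last_ind: s => [|s e IH] p; first by case=> <-.
rewrite !ext_rcons; case E: (ext deltaH q s) => [p'|] // hp.
by have [p'H ->] := IH _ E; apply: hsub.
Qed.

Lemma GammaAugE QH deltaH N q e : GammaAug QH deltaH N q e <->
  q \in QH /\ exists s p, size s <= N /\ ext deltaH q s = Some p /\ deltaH p e <> None.
Proof.
split=> [[x [qH [[q' [E _]]|[_ [_ reach_e]]]]] | [qH [s [p [hs [hp hpe]]]]]] //.
  by split=> //; exists [::], q; rewrite E.
case E: (deltaH q e) => [q'|]; first by exists (Some q'); split=> //; left; exists q'.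
by exists None; split=> //; right; split=> //; split=> //; exists s, p.
Qed.

End Languages.

Section DelayCoobservability.
Variables (Q Sigma : finType) (delta deltaH : Q -> Sigma -> option Q) (q0 : Q)
  (QH : {set Q}) (n : nat) (So Sc : 'I_n -> {set Sigma}) (No : 'I_n -> nat)
  (sigma : Sigma).

Notation reach := (v_reach QH deltaH q0 So Sc No sigma).

Definition violating (k : nat) (q : Q) (qs : 'I_n -> Q) : Prop :=
  reach k (q, qs, k) /\ delta q sigma <> None /\ deltaH q sigma = None /\
  (forall i, sigma \in Sc i -> GammaAug QH deltaH (No i) (qs i) sigma).

(* Case C5: the verifier no longer moves component i. *)
Definition frozen (k d : nat) (i : 'I_n) (x : Q) : Prop :=
  k - d <= No i /\ GammaAug QH deltaH (No i) x sigma.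

Lemma frozen_mono k d d' i x : d <= d' -> frozen k d i x -> frozen k d' i x.
Proof. by move=> hd [hk hg]; split=> //; lia. Qed.

Lemma C1_or_C3E k d i x e :
  C1 So No k d i x e \/ C3 QH deltaH So No sigma k d i x e <->
  e \in So i /\ ~ frozen k d i x.
Proof.
split=> [[[hlt eSo]|[_ [hng eSo]]]|[eSo nf]].
- by split=> // -[hk _]; lia.
- by split=> // -[_ /hng].
- have [hk|hlt] := leqP (k - d) (No i); last by left.
  by right; split=> //; split=> // hg; apply: nf.
Qed.

Lemma C2_or_C4E k d i x e :
  C2 So No k d i x e \/ C4 QH deltaH So No sigma k d i x e <->
  e \notin So i /\ ~ frozen k d i x.
Proof.
split=> [[[hlt eSo]|[_ [hng eSo]]]|[eSo nf]].
- by split=> // -[hk _]; lia.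
- by split=> // -[_ /hng].
- have [hk|hlt] := leqP (k - d) (No i); last by left.
  by right; split=> //; split=> // hg; apply: nf.
Qed.

Definition explained (k : nat) (x : vstate Q n) : Prop :=
  let: (q, qs, d) := x in
  exists t w, size w = d /\ ext deltaH q0 (t ++ w) = Some q /\
  forall i, Ic Sc sigma i -> exists u d0,
    [/\ ext deltaH q0 u = Some (qs i), d0 <= d,
        proj (So i) u = proj (So i) (t ++ take d0 w) &
        d0 = d \/ frozen k d0 i (qs i)].

Lemma explained_init k x : v_init deltaH q0 So Sc No sigma k x -> explained k x.
Proof.
case: x => [[q qs] d] [-> /=]; case: ifP => _.
  case=> -> qs0; exists [::], [::]; split=> //; split=> // i _.
  by exists [::], 0; rewrite qs0; split=> //; left.
case=> _ [t [_ [ht hqs]]]; exists t, [::]; rewrite cats0; split=> //; split=> // i Ii.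
have [/(_ Ii) [u [_ [hu hp]]] _] := hqs i.
by exists u, 0; split=> //; left.
Qed.

Lemma explained_step1 k x y : explained k x ->
  v_step1 QH deltaH So Sc No sigma k x y -> explained k y.
Proof.
case: x => [[q qs] d] [t [w [hw [hq hexp]]]] [e [q' [qs' [_ [hq' [hmove [hstay ->]]]]]]].
exists t, (rcons w e); split; first by rewrite size_rcons hw.
split; first by rewrite -rcons_cat ext_rcons hq.
have take_w d1 : d1 <= d -> take d1 (rcons w e) = take d1 w.
  by move=> hd1; rewrite -cats1 takel_cat ?hw.
have take_all : take d.+1 (rcons w e) = rcons w e.
  by rewrite take_oversize // size_rcons hw.
move=> i Ii; have [u [d0 [hu hd0 hp hlag]]] := hexp i Ii.
have [[eSo nf]|Hc] := classic (e \in So i /\ ~ frozen k d i (qs i)).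
  case: hlag => [Ed0|hf]; last by case: nf; apply: frozen_mono hf.
  exists (rcons u e), d.+1; split=> //; last by left.
    by rewrite ext_rcons hu; apply/hmove/C1_or_C3E.
  by rewrite take_all -rcons_cat !proj_rcons eSo hp Ed0 -hw take_size.
rewrite hstay; last by move=> [_ /C1_or_C3E].
case: hlag => [Ed0|hf]; last first.
  by exists u, d0; split; rewrite ?take_w //; [lia | right; apply: frozen_mono hf].
subst d0; have [eSo|eSo] := boolP (e \in So i).
  have hf : frozen k d i (qs i) by apply: NNPP => nf; apply: Hc.
  by exists u, d; split; rewrite ?take_w //; right.
exists u, d.+1; split=> //; last by left.
by rewrite take_all -rcons_cat proj_rcons (negbTE eSo) hp -hw take_size.
Qed.

Lemma explained_step2 k x y : explained k x ->
  v_step2 QH deltaH So Sc No sigma k x y -> explained k y.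
Proof.
case: x => [[q qs] d] [t [w [hw [hq hexp]]]].
move=> [e [i [qi' [Ii [/C2_or_C4E [eSo nf] [he ->]]]]]].
exists t, w; split=> //; split=> // j Ij /=.
have [->|_] := eqVneq j i; last exact: hexp.
have [u [d0 [hu hd0 hp [Ed0|hf]]]] := hexp i Ii; last first.
  by case: nf; apply: frozen_mono hf.
exists (rcons u e), d0; split=> //; last by left.
  by rewrite ext_rcons hu.
by rewrite proj_rcons (negbTE eSo).
Qed.

Lemma reach_explained k x : reach k x -> explained k x.
Proof.
elim=> {x} [x /explained_init //|x y _ + /explained_step1|x y _ + /explained_step2];
  by auto.
Qed.

Lemma coobs_no_violation k :
  q0 \in QH -> subautomaton QH delta deltaH ->
  delay_coobservable delta deltaH q0 So Sc No sigma ->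
  ~ exists q qs, violating k q qs.
Proof.
move=> q0H hsub Hco [q [qs [Hr [Hd [HdH Hg]]]]].
have [t [w [hw [hq hexp]]]] := reach_explained Hr.
have [_ hqG] := subautomaton_ext hsub q0H hq.
have [i [Ii Hu]] : exists i, sigma \in Sc i /\ forall U,
    Theta_inv delta q0 (So i) (No i) (Theta (So i) (No i) (t ++ w)) U ->
    ~ lang deltaH q0 (rcons U sigma).
  by apply: Hco; rewrite /lang ?ext_rcons ?hq ?hqG ?HdH.
have [u [d0 [hu hd0 hp hlag]]] := hexp i Ii.
have hkd0 : k - d0 <= No i by case: hlag => [->|[]//]; rewrite subnn.
have [_ [s' [p [hs' [hp' hpe]]]]] := (GammaAugE _ _ _ _ _).1 (Hg i Ii).
have hup : ext deltaH q0 (u ++ s') = Some p by rewrite ext_cat hu hp'.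
apply: (Hu (u ++ s')); last by rewrite /lang ext_rcons hup.
split; first by rewrite /lang; have [_ ->] := subautomaton_ext hsub q0H hup.
exists (proj (So i) u); split; last by exists (size s'); rewrite trunc_size_cat.
exists (k - d0); split=> //.
rewrite hp trunc_cat; last by left; rewrite hw leq_subr.
by rewrite /trunc hw subKn.
Qed.

Lemma reach_step2 k d q qs i e y : reach k (q, qs, d) -> Ic Sc sigma i ->
  e \notin So i -> ~ frozen k d i (qs i) -> deltaH (qs i) e = Some y ->
  reach k (q, fun j => if j == i then y else qs j, d).
Proof.
move=> Hr Ii eSo nf hy; apply: (VR_step2 Hr).
by exists e, i, y; split=> //; split=> //; apply/C2_or_C4E.
Qed.

Definition lag_witness (k : nat) (t w : seq Sigma) (i : 'I_n) (v : seq Sigma)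
    (d : nat) : Prop :=
  [/\ exists2 x, ext deltaH q0 v = Some x & GammaAug QH deltaH (No i) x sigma,
      d <= k, k - d <= No i & proj (So i) v = proj (So i) (t ++ take d w)].

Section Simulation.
Variables (k : nat) (t w : seq Sigma) (u : 'I_n -> seq Sigma) (ds : 'I_n -> nat).
Hypothesis size_w : size w = k.
Hypothesis tw_H : ext deltaH q0 (t ++ w) <> None.
Hypothesis u_lag : forall i, Ic Sc sigma i -> lag_witness k t w i (u i) (ds i).

Definition tracks (d : nat) (i : 'I_n) (x : Q) (r : seq Sigma) : Prop :=
  exists v, u i = v ++ r /\ ext deltaH q0 v = Some x /\
    proj (So i) v = proj (So i) (t ++ take d w).

Definition follows (d : nat) (i : 'I_n) (x : Q) : Prop :=
  frozen k d i x \/ exists r, tracks d i x r.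

Definition synced (d : nat) (i : 'I_n) (x : Q) : Prop :=
  frozen k d i x \/
  exists r, tracks d i x r /\ (if r is e :: _ then e \in So i else true).

Lemma synced_follows d i x : synced d i x -> follows d i x.
Proof. by case=> [|[r []]]; [left | right; exists r]. Qed.

Lemma take_w_succ d : d < k -> take d.+1 w = rcons (take d w) (nth sigma w d).
Proof. by move=> hd; apply: take_nth; rewrite size_w. Qed.

Lemma u_ext_prefix i v r : Ic Sc sigma i -> u i = v ++ r ->
  exists x, ext deltaH q0 v = Some x.
Proof.
move=> /u_lag [[x hx _] _ _ _] hu; apply: (ext_prefix (b := r)).
by rewrite -hu hx.
Qed.

Lemma sync_one d q qs i : Ic Sc sigma i -> reach k (q, qs, d) ->
  follows d i (qs i) ->
  exists qs', [/\ reach k (q, qs', d), synced d i (qs' i) &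
                  forall j, j != i -> qs' j = qs j].
Proof.
move=> Ii + [hf|[r]]; first by exists qs; split=> //; left.
elim: r qs => [|e r IH] qs Hr htr; first by exists qs; split=> //; right; exists [::].
have [eSo|eSo] := boolP (e \in So i).
  by exists qs; split=> //; right; exists (e :: r).
have [hf|nf] := classic (frozen k d i (qs i)); first by exists qs; split=> //; left.
have [v [hu [hv hp]]] := htr.
have [y] : exists y, ext deltaH q0 (rcons v e) = Some y.
  by apply: (u_ext_prefix (r := r) Ii); rewrite cat_rcons.
rewrite ext_rcons hv => hy.
have [|qs' [Hr' hs' hother]] := IH _ (reach_step2 Hr Ii eSo nf hy).
  by exists (rcons v e); rewrite eqxx cat_rcons ext_rcons hv proj_rcons (negbTE eSo).
by exists qs'; split=> // j nji; rewrite hother // (negbTE nji).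
Qed.

Lemma sync_all d q qs : reach k (q, qs, d) ->
  (forall i, Ic Sc sigma i -> follows d i (qs i)) ->
  exists qs', reach k (q, qs', d) /\ forall i, Ic Sc sigma i -> synced d i (qs' i).
Proof.
move=> Hr hfol.
suff [qs' [Hr' _ hsync]] : exists qs', [/\ reach k (q, qs', d),
    forall i, Ic Sc sigma i -> follows d i (qs' i) &
    forall i, i \in enum 'I_n -> Ic Sc sigma i -> synced d i (qs' i)].
  by exists qs'; split=> // i; apply: hsync; rewrite mem_enum.
elim: (enum 'I_n) => [|a l [qs1 [Hr1 hfol1 hsync1]]]; first by exists qs.
have [Ia|nIa] := boolP (Ic Sc sigma a); last first.
  exists qs1; split=> // i /predU1P [->|il]; [by rewrite (negbTE nIa) | exact: hsync1].
have [qs2 [Hr2 hsa hother]] := sync_one Ia Hr1 (hfol1 a Ia).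
exists qs2; split=> // i; have [->|nia] := eqVneq i a.
- by move=> _; apply: synced_follows.
- by rewrite hother //; apply: hfol1.
- by [].
- by rewrite hother // => /predU1P [/eqP|il]; [rewrite (negbTE nia) | apply: hsync1].
Qed.

Lemma synced_frozen d i x : Ic Sc sigma i -> ds i <= d -> synced d i x ->
  frozen k d i x.
Proof.
move=> Ii hd [//|[r [[v [hu [hv hp]]] hr]]].
have [[x' hx' hg] _ hkd hpu] := u_lag Ii.
have proj_r : proj (So i) r = [::].
  move: hpu; rewrite hu proj_cat hp (_ : d = ds i + (d - ds i)); last by lia.
  rewrite takeD catA !proj_cat => /(congr1 size); rewrite !size_cat => hsz.
  by apply: size0nil; lia.
have r_nil : r = [::] by case: r hr proj_r {hu} => // e r' eSo; rewrite /proj /= eSo.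
split; first by lia.
by move: hx'; rewrite hu r_nil cats0 hv => -[->].
Qed.

Lemma synced_advance d i x : Ic Sc sigma i -> d < k -> synced d i x ->
  nth sigma w d \in So i -> ~ frozen k d i x ->
  exists2 y, deltaH x (nth sigma w d) = Some y & exists r, tracks d.+1 i y r.
Proof.
move=> Ii hdk hs eSo nf; set e := nth sigma w d.
have [hle|hlt] := leqP (ds i) d; first by case: nf; apply: synced_frozen hs.
case: hs => [//|[r [[v [hu [hv hp]]] hr]]].
have [_ _ _ hpu] := u_lag Ii.
have [r' def_r] : exists r', r = e :: r'.
  have [Z proj_r] : exists Z, proj (So i) r = e :: Z.
    have : proj (So i) (v ++ r) =
           proj (So i) v ++ e :: proj (So i) (take (ds i - d.+1) (drop d.+1 w)).
      rewrite -hu hpu {1}(_ : ds i = d.+1 + (ds i - d.+1)); last by lia.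
      rewrite takeD take_w_succ // catA -rcons_cat proj_cat proj_rcons eSo.
      by rewrite -hp cat_rcons.
    rewrite proj_cat => /(congr1 (drop (size (proj (So i) v)))).
    by rewrite !drop_size_cat // => ->; eexists.
  case: r hr hu proj_r => // e' r' e'So _; rewrite /proj /= e'So => -[<- _].
  by exists r'.
have [y] : exists y, ext deltaH q0 (rcons v e) = Some y.
  by apply: (u_ext_prefix (r := r') Ii); rewrite cat_rcons -def_r.
rewrite ext_rcons hv => hy; exists y => //; exists r', (rcons v e).
by rewrite cat_rcons -def_r ext_rcons hv take_w_succ // -rcons_cat !proj_rcons eSo hp.
Qed.

Lemma synced_stay d i x : d < k -> synced d i x ->
  ~ (nth sigma w d \in So i /\ ~ frozen k d i x) -> follows d.+1 i x.
Proof.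
move=> hdk hs hn; have [hf|nf] := classic (frozen k d i x).
  by left; apply: frozen_mono hf.
case: hs => [//|[r [[v [hu [hv hp]]] _]]].
have eSo : nth sigma w d \notin So i by apply/negP => eSo; apply: hn.
right; exists r, v; split=> //; split=> //.
by rewrite take_w_succ // -rcons_cat proj_rcons (negbTE eSo).
Qed.

Lemma follow_step d q qs : d < k -> reach k (q, qs, d) ->
  ext deltaH q0 (t ++ take d w) = Some q ->
  (forall i, Ic Sc sigma i -> follows d i (qs i)) ->
  exists q' qs', [/\ reach k (q', qs', d.+1),
    ext deltaH q0 (t ++ take d.+1 w) = Some q' &
    forall i, Ic Sc sigma i -> follows d.+1 i (qs' i)].
Proof.
move=> hdk Hr hq hfol; have [qs1 [Hr1 hsync]] := sync_all Hr hfol.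
set e := nth sigma w d.
have [q' hq'] : exists q', ext deltaH q0 (t ++ take d.+1 w) = Some q'.
  by apply: (ext_prefix (b := drop d.+1 w)); rewrite -catA cat_take_drop.
have hqe : deltaH q e = Some q'.
  by move: hq'; rewrite take_w_succ // -rcons_cat ext_rcons hq.
pose moves i := Ic Sc sigma i /\ e \in So i /\ ~ frozen k d i (qs1 i).
have /fin_all_exists [qs' hqs'] : forall i, exists y,
    (moves i -> deltaH (qs1 i) e = Some y /\ exists r, tracks d.+1 i y r) /\
    (~ moves i -> y = qs1 i).
  move=> i; have [[Ii [eSo nf]]|nm] := classic (moves i).
    have [y hy htr] := synced_advance Ii hdk (hsync i Ii) eSo nf.
    by exists y; split=> [// | nm]; exfalso; apply: nm.
  by exists (qs1 i); split=> // /nm.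
exists q', qs'; split=> //.
  apply: (VR_step1 Hr1); exists e, q', qs'; do 2!split=> //; split.
    by move=> i Ii /C1_or_C3E [eSo nf]; have [/(_ (conj Ii (conj eSo nf))) []] := hqs' i.
  split=> // i hn; apply: (hqs' i).2 => -[Ii hm].
  by apply: hn; split=> //; apply/C1_or_C3E.
move=> i Ii; have [hmove hstay] := hqs' i; have [m|nm] := classic (moves i).
  by right; have [_ ?] := hmove m.
by rewrite hstay //; apply: synced_stay hdk (hsync i Ii) _ => hm; apply: nm.
Qed.

Hypothesis k_le : k <= Nmax Sc No sigma.
Hypothesis t_nil : k < Nmax Sc No sigma -> t = [::].

Lemma follow_init : exists q qs, [/\ reach k (q, qs, 0),
  ext deltaH q0 (t ++ take 0 w) = Some q & forall i, Ic Sc sigma i -> follows 0 i (qs i)].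
Proof.
rewrite take0 cats0; have [hk|hk] := ltnP k (Nmax Sc No sigma).
  rewrite (t_nil hk); exists q0, (fun _ => q0); split=> //.
    by apply: VR_init; rewrite /v_init hk.
  by move=> i _; right; exists (u i), [::]; rewrite take0 (t_nil hk).
have [q hq] : exists q, ext deltaH q0 t = Some q by apply: ext_prefix tw_H.
have /fin_all_exists [qs hqs] : forall i, exists x, (Ic Sc sigma i -> exists v r,
    [/\ u i = v ++ r, ext deltaH q0 v = Some x & proj (So i) v = proj (So i) t]) /\
    (~~ Ic Sc sigma i -> x = q0).
  move=> i; have [Ii|nIi] := boolP (Ic Sc sigma i); last by exists q0; split=> // /negP.
  have [_ _ _] := u_lag Ii; rewrite proj_cat => /proj_prefix [v [r [hu hp]]].
  have [x hx] := u_ext_prefix Ii hu.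
  by exists x; split=> // _; exists v, r.
exists q, qs; split=> //.
  apply: VR_init; rewrite /v_init ltnNge hk /=; split=> //; split; first by lia.
  exists t; split; first by rewrite /lang hq.
  split=> // i; have [hin hout] := hqs i; split=> // /hin [v [r [_ hv hp]]].
  by exists v; rewrite /lang hv.
move=> i /(hqs i).1 [v [r [hu hv hp]]]; right; exists r, v.
by rewrite take0 cats0.
Qed.

Lemma follow_all d : d <= k -> exists q qs, [/\ reach k (q, qs, d),
  ext deltaH q0 (t ++ take d w) = Some q & forall i, Ic Sc sigma i -> follows d i (qs i)].
Proof.
elim: d => [_|d IH hd]; first exact: follow_init.
have [q [qs [Hr hq hfol]]] := IH (ltnW hd).
exact: follow_step hd Hr hq hfol.
Qed.

Lemma reach_all_frozen : exists q qs, [/\ reach k (q, qs, k),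
  ext deltaH q0 (t ++ w) = Some q &
  forall i, Ic Sc sigma i -> GammaAug QH deltaH (No i) (qs i) sigma].
Proof.
have [q [qs [Hr hq hfol]]] := follow_all (leqnn k).
have [qs' [Hr' hsync]] := sync_all Hr hfol.
exists q, qs'; split=> //; first by rewrite -size_w take_size in hq.
move=> i Ii; have [_ hdk _ _] := u_lag Ii.
by have [] := synced_frozen Ii hdk (hsync i Ii).
Qed.

End Simulation.

Lemma lag_witness_of_Theta_inv k t w i U :
  q0 \in QH -> subautomaton QH delta deltaH ->
  size w = k -> No i <= k \/ t = [::] ->
  Theta_inv delta q0 (So i) (No i) (Theta (So i) (No i) (t ++ w)) U ->
  lang deltaH q0 (rcons U sigma) -> exists v d, lag_witness k t w i v d.
Proof.
move=> q0H hsub hw hk [_ [_ [[m [hm ->]] [m' [hm' hobs]]]]] hU.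
have [p hp hpe] : exists2 p, ext deltaH q0 U = Some p & deltaH p sigma <> None.
  by move: hU; rewrite /lang ext_rcons; case: (ext deltaH q0 U) => [p|] //; exists p.
have def_U : U = trunc U m' ++ drop (size U - m') U by rewrite cat_take_drop.
have [x hx] : exists x, ext deltaH q0 (trunc U m') = Some x.
  by apply: (ext_prefix (b := drop (size U - m') U)); rewrite -def_U hp.
exists (trunc U m'), (k - m); split; rewrite ?leq_subr //; first last.
- by rewrite -hobs trunc_cat /trunc ?hw //; case: hk => [?|->]; [left; lia | right].
- by lia.
exists x => //; apply/GammaAugE; split; first by have [] := subautomaton_ext hsub q0H hx.
exists (drop (size U - m') U), p; split; first by rewrite size_drop; lia.
by move: hp; rewrite {1}def_U ext_cat hx.
Qed.

Lemma coobs_of_no_violation :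
  q0 \in QH -> subautomaton QH delta deltaH ->
  (forall k, k <= Nmax Sc No sigma -> ~ exists q qs, violating k q qs) ->
  delay_coobservable delta deltaH q0 So Sc No sigma.
Proof.
move=> q0H hsub Hno s Ls LGs NLHs; apply: NNPP => Hne.
have HU i : Ic Sc sigma i -> exists2 U,
    Theta_inv delta q0 (So i) (No i) (Theta (So i) (No i) s) U &
    lang deltaH q0 (rcons U sigma).
  move=> Ii; apply: NNPP => hn; apply: Hne; exists i; split=> // U HU HL.
  by apply: hn; exists U.
pose k := minn (size s) (Nmax Sc No sigma).
have [t [w [def_s hw ht]]] : exists t w,
    [/\ s = t ++ w, size w = k & k < Nmax Sc No sigma -> t = [::]].
  exists (take (size s - k) s), (drop (size s - k) s); rewrite cat_take_drop size_drop.
  split=> // [|hk]; first by lia.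
  by rewrite (_ : size s - k = 0) ?take0 //; lia.
have /fin_all_exists [uds huds] : forall i, exists p : seq Sigma * nat,
    Ic Sc sigma i -> lag_witness k t w i p.1 p.2.
  move=> i; have [Ii|_] := boolP (Ic Sc sigma i); last by exists ([::], 0).
  have [U hU hUs] := HU i Ii.
  have hNi : No i <= Nmax Sc No sigma by apply: leq_bigmax_cond.
  have hk : No i <= k \/ t = [::].
    by have [/ht|hkN] := ltnP k (Nmax Sc No sigma); [right | left; lia].
  rewrite def_s in hU; have [v [d hvd]] := lag_witness_of_Theta_inv q0H hsub hw hk hU hUs.
  by exists (v, d).
have [|q [qs [Hr hq hfr]]] := reach_all_frozen hw _ huds (geq_minr _ _) ht.
  by rewrite -def_s.
apply: (Hno k (geq_minr _ _)); exists q, qs; split=> //.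
rewrite -def_s in hq; have [_ hqG] := subautomaton_ext hsub q0H hq.
move: LGs NLHs; rewrite /lang !ext_rcons hq hqG => hG nH; split=> //; split=> //.
by case: (deltaH q sigma) nH => // y nH; exfalso; apply: nH.
Qed.

End DelayCoobservability.

Theorem theorem2 (Q Sigma : finType) (delta : Q -> Sigma -> option Q) (q0 : Q)
  (QH : {set Q}) (deltaH : Q -> Sigma -> option Q)
  (n : nat) (So Sc : 'I_n -> {set Sigma}) (No : 'I_n -> nat) (sigma : Sigma) :
  q0 \in QH ->
  (forall q e q', q \in QH -> deltaH q e = Some q' ->
      q' \in QH /\ delta q e = Some q') ->
  (exists i, sigma \in Sc i) ->
  delay_coobservable delta deltaH q0 So Sc No sigma <->
  (forall k, k <= Nmax Sc No sigma ->
     ~ exists (q : Q) (qs : 'I_n -> Q),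
         v_reach QH deltaH q0 So Sc No sigma k (q, qs, k) /\
         delta q sigma <> None /\ deltaH q sigma = None /\
         (forall i, sigma \in Sc i -> GammaAug QH deltaH (No i) (qs i) sigma)).
Proof.
move=> q0H hsub _; split=> [Hco k _|]; first exact: coobs_no_violation k q0H hsub Hco.
exact: coobs_of_no_violation q0H hsub.
Qed.
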